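(* Let $(A,B,C,D)\in\mathcal{M}_k^j(\rho)$. Then $C_p,D_p\neq 0$ for all $p=1,2$. In particular, $$\left\{\Omega_j\omega_r\::\:r=\tfrac{j}{2},j,k-\tfrac{j}{2}-1,k-1\right\}\subset\mathrm{Eval}(G),$$ with $C_1\in\mathrm{Evec}(G,\Omega_j\omega_{\frac{j}{2}})$, $C_2\in\mathrm{Evec}(G,\Omega_j\omega_j)$, $D_1\in\mathrm{Ecovec}(G,\Omega_j\omega_{k-\frac{j}{2}-1})$, $D_2\in\mathrm{Ecovec}(G,\Omega_j\omega_{k-1})$.
   Context: Non-singular monad matrices are $(A,B,C,D)$ with $A\in GL(k,\mathbb{C})$, $B\in Mat_{k\times k}(\mathbb{C})$, $C\in Mat_{k\times 2}(\mathbb{C})$, $D\in Mat_{2\times k}(\mathbb{C})$, satisfying $[A,B]+CD=0$ and the full-rank conditions, considered up to $(A,B,C,D)\sim(hAh^{-1},hBh^{-1},hC,Dh^{-1})$; $C_p$ is the $p$-th column of $C$ and $D_p$ the $p$-th row of $D$. Fix $j\in\mathbb{Z}_{2k}$ even and $\omega\in(-\pi,\pi)$. $\mathcal{M}_k^j(\rho)$ is the set of such matrices for which there is $g\in GL(k,\mathbb{C})$ with $e^{\imath\frac{j\pi}{k}}A=gAg^{-1}$, $e^{\imath\frac{\pi}{k}}B=g(B-C_1D_1A^{-1})g^{-1}$, $e^{\imath\frac{\pi}{2k}}e^{\imath\frac{j\pi}{4k}}C_1=e^{\imath\omega}gC_2$, $e^{\imath\frac{\pi}{2k}}e^{\imath\frac{3j\pi}{4k}}C_2=e^{-\imath\omega}gAC_1$,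 $e^{\imath\frac{\pi}{2k}}e^{\imath\frac{3j\pi}{4k}}D_1=e^{-\imath\omega}D_2g^{-1}$, $e^{\imath\frac{\pi}{2k}}e^{\imath\frac{j\pi}{4k}}D_2=e^{\imath\omega}D_1A^{-1}g^{-1}$ (invariance under $\rho(C_{2k}^{j,\omega})$). Then with $G=e^{-\imath\frac{j\pi}{2k}}g^2A$ one has $e^{\imath\frac{2j\pi}{k}}A=GAG^{-1}$, $e^{\imath\frac{2\pi}{k}}B=GBG^{-1}$, $e^{\imath\frac{\pi}{k}}C=GC\,\mathrm{adj}(\sigma_{2j\pi/k})$, $e^{\imath\frac{\pi}{k}}D=\sigma_{2j\pi/k}DG^{-1}$, where $\sigma_\varphi=\mathrm{diag}(e^{-\imath\frac{3\varphi}{4}},e^{-\imath\frac{\varphi}{4}})$, $\mathrm{adj}(\sigma)=\det(\sigma)\sigma^{-1}$. Notation: $\Omega_j=e^{\imath\frac{(2-j)\pi}{2k}}$, $\omega_r=e^{\imath\frac{2\pi r}{k}}$ (indices mod $k$); $\mathrm{Evec}(G,\lambda)$ is the $\lambda$-eigenspace of $G$ and $\mathrm{Ecovec}(G,\lambda)$ the space of row vectors $v$ with $vG=\lambda v$. *)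

From HB Require Import structures.
From mathcomp Require Import all_boot all_order all_algebra.
From mathcomp Require Import reals trigo.
From mathcomp Require Import complex.
Unset Printing Implicit Defensive.
Import Order.TTheory GRing.Theory Num.Theory.
Local Open Scope ring_scope.

Definition expi {R : realType} (t : R) : R[i] := Complex (cos t) (sin t).

Definition Omega {R : realType} (k j : nat) : R[i] :=
  expi ((2%:R - j%:R) * pi / (2 * k%:R)).

Definition omega {R : realType} (k r : nat) : R[i] :=
  expi (2 * pi * r%:R / k%:R).

(* Non-singular monad matrices: A invertible, [A,B] + CD = 0, and the
   full-rank conditions: for all (x,y) in C^2, alpha = (A - x; B - y; D) is
   injective and beta = (-(B - y), A - x, C) is surjective. *)
Definition monad_nonsingular {R : realType} (k : nat)
  (A B : 'M[R[i]]_k) (C : 'M[R[i]]_(k, 2)) (D : 'M[R[i]]_(2, k)) : Prop :=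
  [/\ A \in unitmx,
      A *m B - B *m A + C *m D = 0,
      (forall x y : R[i],
         \rank (col_mx (A - x%:M) (col_mx (B - y%:M) D)) = k) &
      (forall x y : R[i],
         \rank (row_mx (- (B - y%:M)) (row_mx (A - x%:M) C)) = k)].

(* C_p, D_p (p = 1, 2 corresponds to indices 0, 1) *)
Definition Ccol {R : realType} (k : nat) (C : 'M[R[i]]_(k, 2)) (p : 'I_2) : 'cV[R[i]]_k :=
  col p C.
Definition Drow {R : realType} (k : nat) (D : 'M[R[i]]_(2, k)) (p : 'I_2) : 'rV[R[i]]_k :=
  row p D.

(* invariance under rho(C_{2k}^{j,omega}) witnessed by g *)
Definition rho_invariant_by {R : realType} (k j : nat) (w : R)
  (A B : 'M[R[i]]_k) (C : 'M[R[i]]_(k, 2)) (D : 'M[R[i]]_(2, k))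
  (g : 'M[R[i]]_k) : Prop :=
  let C1 := col 0 C in let C2 := col 1 C in
  let D1 := row 0 D in let D2 := row 1 D in
  let ginv := invmx g in
  let e (t : R) := expi (t * pi / k%:R) in
  [/\ g \in unitmx,
      e (j%:R) *: A = g *m A *m ginv &
      e 1 *: B = g *m (B - C1 *m D1 *m invmx A) *m ginv] /\
  [/\ e (1 / 2) * e (j%:R / 4) *: C1 = expi w *: (g *m C2),
      e (1 / 2) * e (3 * j%:R / 4) *: C2 = expi (- w) *: (g *m A *m C1),
      e (1 / 2) * e (3 * j%:R / 4) *: D1 = expi (- w) *: (D2 *m ginv) &
      e (1 / 2) * e (j%:R / 4) *: D2 = expi w *: (D1 *m invmx A *m ginv)].

Definition in_Mkj {R : realType} (k j : nat) (w : R)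
  (A B : 'M[R[i]]_k) (C : 'M[R[i]]_(k, 2)) (D : 'M[R[i]]_(2, k)) : Prop :=
  monad_nonsingular k A B C D /\ exists g, rho_invariant_by k j w A B C D g.

Definition Gmat {R : realType} (k j : nat) (A g : 'M[R[i]]_k) : 'M[R[i]]_k :=
  expi (- (j%:R * pi / (2 * k%:R))) *: (g *m g *m A).

Definition in_Evec {R : realType} (k : nat) (G : 'M[R[i]]_k) (l : R[i]) (v : 'cV[R[i]]_k) :=
  G *m v = l *: v.
Definition in_Ecovec {R : realType} (k : nat) (G : 'M[R[i]]_k) (l : R[i]) (v : 'rV[R[i]]_k) :=
  v *m G = l *: v.
Definition in_Eval {R : realType} (k : nat) (G : 'M[R[i]]_k) (l : R[i]) :=
  exists2 v : 'cV[R[i]]_k, v != 0 & G *m v = l *: v.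

(* The invariance under rho(C_2k^{j,w}) says that g A sends C_1 to a multiple
   of C_2, g sends C_2 back to a multiple of C_1 (dually for the rows D_1, D_2),
   and g A = e^{i j pi/k} A g.  Hence C_1, C_2 are eigenvectors and D_1, D_2 left
   eigenvectors of g^2 A, the eigenvalues being products of the phases, and the
   two columns (resp. rows) vanish together.  Nonsingularity excludes C = 0:
   otherwise A and B commute, and a common left eigenvector of A and B is killed
   by the surjective map beta (x, y); dually it excludes D = 0.  Left eigenvalues
   are eigenvalues, which gives the points of Eval(G). *)

From HB Require Import structures.
From mathcomp Require Import all_boot all_order all_algebra.
From mathcomp Require Import reals trigo complex.
From mathcomp.algebra_tactics Require Import ring.
Import Order.TTheory GRing.Theory Num.Theory.
Local Open Scope ring_scope.

Section ComplexExponential.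
Context {R : realType}.
Implicit Types x y : R.

Lemma expiD x y : expi x * expi y = expi (x + y).
Proof.
rewrite /expi cosD sinD; apply/eqP; rewrite eq_complex /=.
by apply/andP; split; apply/eqP; ring.
Qed.

Lemma expi0 : expi 0 = 1 :> R[i].
Proof. by rewrite /expi cos0 sin0. Qed.

Lemma expi_neq0 x : expi x != 0.
Proof.
apply/negP => /eqP ex0; have := expiD x (- x).
by rewrite ex0 mul0r subrr expi0 => /eqP; rewrite eq_sym oner_eq0.
Qed.

Lemma expiN x : expi (- x) = (expi x)^-1.
Proof. by apply: (mulfI (expi_neq0 x)); rewrite expiD subrr expi0 mulfV ?expi_neq0. Qed.

Lemma expi_shift2pi x y : x = y + 2 * pi -> expi x = expi y.
Proof. by move=> ->; rewrite -expiD /expi mulr_natl cos2pi sin2pi mulr1. Qed.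

End ComplexExponential.

Lemma eigenvalue_tr {F : fieldType} {n} (M : 'M[F]_n) a :
  eigenvalue M^T a = eigenvalue M a.
Proof.
rewrite /eigenvalue /eigenspace !kermx_eq0 /row_free -mxrank_tr.
by rewrite linearB /= trmxK tr_scalar_mx.
Qed.

Lemma eigenvalue_colP {F : fieldType} {n} (M : 'M[F]_n) a :
  reflect (exists2 v : 'cV_n, v != 0 & M *m v = a *: v) (eigenvalue M a).
Proof.
rewrite -eigenvalue_tr; apply: (iffP eigenvalueP) => -[v].
- by move=> vM v0; exists v^T; rewrite ?trmx_eq0 // -[M]trmxK -trmx_mul vM linearZ.
- by move=> v0 Mv; exists v^T; rewrite ?trmx_eq0 // -trmx_mul Mv linearZ.
Qed.

Lemma row2_eq0 {F : fieldType} {n} (D : 'M[F]_(2, n)) :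
  (D == 0) = (row 0 D == 0) && (row 1 D == 0).
Proof.
apply/eqP/andP => [-> | [/eqP D0 /eqP D1]]; first by rewrite !row0.
apply/row_matrixP => i; rewrite row0.
by case: i => -[|[|//]] i2; [rewrite -D0 | rewrite -D1]; congr row; apply: val_inj.
Qed.

Lemma col2_eq0 {F : fieldType} {n} (C : 'M[F]_(n, 2)) :
  (C == 0) = (col 0 C == 0) && (col 1 C == 0).
Proof. by rewrite -trmx_eq0 row2_eq0 -!tr_col !trmx_eq0. Qed.

Lemma common_left_eigenvector {F : numClosedFieldType} {n} {A B : 'M[F]_n} :
  (0 < n)%N -> A *m B = B *m A ->
  exists x y (v : 'rV_n), [/\ v != 0, v *m (A - x%:M) = 0 & v *m (B - y%:M) = 0].
Proof.
move=> n_gt0 AB; have [v v0 /andP[/sub_rVP[x vA] /sub_rVP[y vB]]] :=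
  common_eigenvector2 n_gt0 AB.
by exists x, y, v; rewrite !mulmxBr !mul_mx_scalar vA vB !subrr.
Qed.

Section NonsingularMonad.
Context {R : realType} {k : nat} {A B : 'M[R[i]]_k}.
Context {C : 'M[R[i]]_(k, 2)} {D : 'M[R[i]]_(2, k)}.
Hypotheses (k_gt0 : (0 < k)%N) (nsAB : monad_nonsingular k A B C D).

Lemma monad_C_neq0 : C != 0.
Proof.
case: nsAB => _ commAB _ beta_rk; apply/eqP => C0.
have AB : A *m B = B *m A.
  by apply/eqP; rewrite -subr_eq0 -commAB C0 mul0mx addr0.
have [x [y [v [v0 vA vB]]]] := common_left_eigenvector k_gt0 AB.
have beta_free : row_free (row_mx (- (B - y%:M)) (row_mx (A - x%:M) C)).
  by rewrite /row_free beta_rk.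
move: (mulmx_free_eq0 v beta_free).
by rewrite !mul_mx_row mulmxN vA vB C0 mulmx0 oppr0 !row_mx0 eqxx (negbTE v0).
Qed.

Lemma monad_D_neq0 : D != 0.
Proof.
case: nsAB => _ commAB alpha_rk _; apply/eqP => D0.
have AB : A^T *m B^T = B^T *m A^T.
  rewrite -!trmx_mul; congr trmx; apply/eqP.
  by rewrite eq_sym -subr_eq0 -commAB D0 mulmx0 addr0.
have [x [y [v [v0 vA vB]]]] := common_left_eigenvector k_gt0 AB.
have alpha_free : row_free (col_mx (A - x%:M) (col_mx (B - y%:M) D))^T.
  by rewrite /row_free mxrank_tr alpha_rk.
move: (mulmx_free_eq0 v alpha_free).
rewrite !tr_col_mx !mul_mx_row !(linearB trmx) /= !tr_scalar_mx vA vB D0 trmx0.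
by rewrite mulmx0 !row_mx0 eqxx (negbTE v0).
Qed.

End NonsingularMonad.

Section TwistedEigenvectors.
Context {F : fieldType} {k : nat} {A g : 'M[F]_k}.
Context {C1 C2 : 'cV[F]_k} {D1 D2 : 'rV[F]_k} {a b c : F}.
Hypotheses (gA : g *m A = c *: (A *m g)).
Hypotheses (gAC1 : g *m A *m C1 = a *: C2) (gC2 : g *m C2 = b *: C1).
Hypotheses (D2E : D2 = a *: (D1 *m g)) (D1E : D1 = b *: (D2 *m g *m A)).

Lemma twisted_eigenvector_C1 {d l : F} :
  l = d * (a * b) -> (d *: (g *m g *m A)) *m C1 = l *: C1.
Proof.
move=> ->; rewrite -scalemxAl -(mulmxA g g A) -(mulmxA g) gAC1 -scalemxAr gC2.
by rewrite !scalerA mulrA.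
Qed.

Lemma twisted_eigenvector_C2 {d l : F} :
  l = d * (c * (a * b)) -> (d *: (g *m g *m A)) *m C2 = l *: C2.
Proof.
move=> ->; rewrite -scalemxAl -(mulmxA g g A) gA -scalemxAr -scalemxAl.
rewrite (mulmxA g A g) -(mulmxA (g *m A)) gC2 -scalemxAr gAC1 !scalerA.
by congr (_ *: _); ring.
Qed.

Lemma twisted_eigencovector_D1 {d l : F} :
  l * (a * b) = d -> D1 *m (d *: (g *m g *m A)) = l *: D1.
Proof.
move=> <-; rewrite [in RHS]D1E D2E -!scalemxAl -!scalemxAr !scalerA !mulmxA.
by congr (_ *: _); ring.
Qed.

Lemma twisted_eigencovector_D2 {d l : F} : a * b != 0 ->
  l * (a * b) = d * c -> D2 *m (d *: (g *m g *m A)) = l *: D2.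
Proof.
move=> ab0 ldc; apply: (scalerI ab0).
have abD2 : (a * b) *: (D2 *m (g *m g *m A)) = c *: D2.
  rewrite -(mulmxA g g A) gA -scalemxAr -scalemxAr (mulmxA g A g) !mulmxA.
  by rewrite scalerA mulrC -scalerA -scalerA scalemxAl -D1E -D2E.
rewrite -scalemxAr scalerA (mulrC _ d) -(scalerA d (a * b)) abD2 !scalerA -ldc.
by congr (_ *: _); ring.
Qed.

Lemma twisted_C1_eq0 : a != 0 -> b != 0 -> (C1 == 0) = (C2 == 0).
Proof.
move=> a0 b0; apply/eqP/eqP => [C10 | C20].
- by move: gAC1; rewrite C10 mulmx0 => /esym/eqP; rewrite scaler_eq0 (negbTE a0) => /eqP.
- by move: gC2; rewrite C20 mulmx0 => /esym/eqP; rewrite scaler_eq0 (negbTE b0) => /eqP.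
Qed.

Lemma twisted_D1_eq0 : (D1 == 0) = (D2 == 0).
Proof.
apply/eqP/eqP => [D10 | D20]; [rewrite D2E D10 | rewrite D1E D20].
all: by rewrite !mul0mx scaler0.
Qed.

End TwistedEigenvectors.

Definition rho_phase {R : realType} (k : nat) (t : R) : R[i] := expi (t * pi / k%:R).

Definition rho_alpha {R : realType} (k j : nat) (w : R) : R[i] :=
  expi w * (rho_phase k (1 / 2) * rho_phase k (3 * j%:R / 4)).

Definition rho_beta {R : realType} (k j : nat) (w : R) : R[i] :=
  expi (- w) * (rho_phase k (1 / 2) * rho_phase k (j%:R / 4)).

Lemma rho_invariant_relations {R : realType} {k j : nat} {w : R} {A B C D g} :
  A \in unitmx -> rho_invariant_by k j w A B C D g ->
  [/\ g *m A = rho_phase k j%:R *: (A *m g),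
      g *m A *m col 0 C = rho_alpha k j w *: col 1 C,
      g *m col 1 C = rho_beta k j w *: col 0 C,
      row 1 D = rho_alpha k j w *: (row 0 D *m g) &
      row 0 D = rho_beta k j w *: (row 1 D *m g *m A)].
Proof.
move=> Au [[gu hA _] [h1 h2 h3 h4]]; have ew := expi_neq0 w.
rewrite /rho_alpha /rho_beta /rho_phase -!(scalerA (expi w)) -!(scalerA (expi (- w))).
split.
- by rewrite scalemxAl hA -mulmxA mulVmx // mulmx1.
- by rewrite h2 expiN scalerKV.
- by rewrite h1 expiN scalerK.
- by rewrite scalemxAl h3 expiN -scalemxAl scalerKV // -mulmxA mulVmx // mulmx1.
- rewrite !scalemxAl h4 expiN -!scalemxAl scalerK //.
  by rewrite -(mulmxA _ (invmx g)) mulVmx // mulmx1 -mulmxA mulVmx // mulmx1.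
Qed.

Section Phases.
Context {R : realType} {k j : nat} (w : R).
Hypotheses (k_gt0 : (0 < k)%N) (jk : (j < 2 * k)%N) (j_even : ~~ odd j).

Let k_neq0 : k%:R != 0 :> R.
Proof. by rewrite pnatr_eq0 -lt0n. Qed.

Lemma rho_alpha_beta :
  rho_alpha k j w * rho_beta k j w = expi ((1 + j%:R) * pi / k%:R).
Proof. by rewrite /rho_alpha /rho_beta /rho_phase !expiD; congr expi; field. Qed.

Lemma Gmat_eigenphases :
  let d := expi (- (j%:R * pi / (2 * k%:R))) in
  let ab := rho_alpha k j w * rho_beta k j w in
  [/\ Omega k j * omega k j./2 = d * ab,
      Omega k j * omega k j = d * (rho_phase k j%:R * ab),
      Omega k j * omega k (k - j./2 - 1) * ab = d &
      Omega k j * omega k (k - 1) * ab = d * rho_phase k j%:R].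
Proof.
have jE : j = (j./2).*2 by rewrite -[LHS]odd_double_half (negbTE j_even).
have hk_gt : (j./2 < k)%N by move: jk; rewrite {1}jE -mul2n ltn_pmul2l.
have j2 : j%:R = 2 * (j./2)%:R :> R by rewrite {1}jE -mul2n natrM.
have hk : (k - j./2 - 1)%:R = k%:R - (j./2)%:R - 1 :> R.
  by rewrite !natrB ?subn_gt0 // ltnW.
have hk1 : (k - 1)%:R = k%:R - 1 :> R by rewrite natrB.
rewrite rho_alpha_beta /Omega /omega /rho_phase !expiD; split.
- by congr expi; rewrite j2; field.
- by congr expi; field.
- by apply: expi_shift2pi; rewrite hk j2; field.
- by apply: expi_shift2pi; rewrite hk1; field.
Qed.

End Phases.

Theorem mainTheorem8 (R : realType) (k j : nat) (w : R)
  (A B : 'M[R[i]]_k) (C : 'M[R[i]]_(k, 2)) (D : 'M[R[i]]_(2, k)) (g : 'M[R[i]]_k) :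
  (0 < k)%N -> (j < 2 * k)%N -> ~~ odd j ->
  - pi < w < pi ->
  monad_nonsingular k A B C D ->
  rho_invariant_by k j w A B C D g ->
  let G := Gmat k j A g in
  [/\ col 0 C != 0, col 1 C != 0, row 0 D != 0 & row 1 D != 0] /\
  ([/\ in_Eval k G (Omega k j * omega k j./2),
          in_Eval k G (Omega k j * omega k j),
          in_Eval k G (Omega k j * omega k (k - j./2 - 1)) &
          in_Eval k G (Omega k j * omega k (k - 1))] /\
   [/\ in_Evec k G (Omega k j * omega k j./2) (col 0 C),
          in_Evec k G (Omega k j * omega k j) (col 1 C),
          in_Ecovec k G (Omega k j * omega k (k - j./2 - 1)) (row 0 D) &
          in_Ecovec k G (Omega k j * omega k (k - 1)) (row 1 D)]).
Proof.
move=> k_gt0 jk j_even _ nsAB inv G.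
have Au : A \in unitmx by case: nsAB.
have [gA gAC1 gC2 D2E D1E] := rho_invariant_relations Au inv.
have [a0 b0] : rho_alpha k j w != 0 /\ rho_beta k j w != 0.
  by rewrite !mulf_neq0 ?expi_neq0.
have [l1 l2 l3 l4] := Gmat_eigenphases w k_gt0 jk j_even.
have eqC := twisted_C1_eq0 gAC1 gC2 a0 b0.
have eqD := twisted_D1_eq0 D2E D1E.
have nC1 : col 0 C != 0 by move: (monad_C_neq0 k_gt0 nsAB); rewrite col2_eq0 -eqC andbb.
have nD1 : row 0 D != 0 by move: (monad_D_neq0 k_gt0 nsAB); rewrite row2_eq0 -eqD andbb.
have nC2 : col 1 C != 0 by rewrite -eqC.
have nD2 : row 1 D != 0 by rewrite -eqD.
have EC1 := twisted_eigenvector_C1 gAC1 gC2 l1.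
have EC2 := twisted_eigenvector_C2 gA gAC1 gC2 l2.
have ED1 := twisted_eigencovector_D1 D2E D1E l3.
have ED2 := twisted_eigencovector_D2 gA D2E D1E (mulf_neq0 a0 b0) l4.
split; first by split.
split; last by split.
split.
- by exists (col 0 C).
- by exists (col 1 C).
- by apply/eigenvalue_colP/eigenvalueP; exists (row 0 D).
- by apply/eigenvalue_colP/eigenvalueP; exists (row 1 D).
Qed.
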